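(* For every path $\omega\in\Omega$: $I_\textnormal{wCH}(\omega)\subseteq I_\textnormal{CH}(\omega)\subseteq I_\textnormal{C}(\omega)$, $I_\textnormal{wCH}(\omega)\subseteq I_\textnormal{S}(\omega)\subseteq I_\textnormal{C}(\omega)$, and $I_\textnormal{C}(\omega)\subseteq I_\textnormal{wML}(\omega)\subseteq I_\textnormal{ML}(\omega)$.
   Context: $\mathcal{X}=\{0,1\}$; $\Omega=\mathcal{X}^{\mathbb{N}}$ (paths); $\mathbb{S}=\bigcup_{n\ge0}\mathcal X^n$ (situations), $\square$ empty string, $|s|$ length, $\omega_{1:n}=(\omega_1,\dots,\omega_n)$, $\omega_{1:0}=\square$. $\mathcal I$: nonempty closed intervals $I\subseteq[0,1]$ (interval forecasts). For $f:\mathcal X\to\mathbb R$, $\overline E_I(f)=\max_{p\in I}[pf(1)+(1-p)f(0)]$. A test supermartingale for $I$ is $T:\mathbb S\to\mathbb R_{\ge0}$ with $T(\square)=1$ and $\overline E_I(T(s\,\cdot)-T(s))\le0$ for all $s$. Real maps on countable effectively encoded sets are computable if recursively approximable to within $2^{-n}$ by rationals, and lower semicomputable if they are limits of recursive non-decreasing rational sequences. A multiplier process $D$ maps situations to gambles and generates $D^{\circledcirc}(x_1,\dots,x_n)=\prod_{k=0}^{n-1}D(x_{1:k})(x_{k+1})$; it is lower semicomputable if $(s,x)\mapsto D(s)(x)$ is. For a path $\omega$ and $I\in\mathcal I$: ML-random if no lower semicomputable test supermartingale $T$ for $I$ has $\limsup_nT(\omega_{1:n})=\infty$; wML-random if no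 test supermartingale for $I$ of the form $D^{\circledcirc}$, $D$ lower semicomputable, has this; C-random if no computable test supermartingale for $I$ has this; S-random if there is no computable test supermartingale $T$ for $I$ with a computable non-decreasing unbounded $\tau:\mathbb N_0\to\mathbb R_{\ge0}$ satisfying $\limsup_n[T(\omega_{1:n})-\tau(n)]\ge0$; CH-random (resp. wCH-random) if for every recursive (resp. recursive temporal, i.e. depending only on $|s|$) $S:\mathbb S\to\{0,1\}$ with $\sum_{k=0}^{n-1}S(\omega_{1:k})\to\infty$, the relative frequencies $\frac{\sum_{k<n}S(\omega_{1:k})\omega_{k+1}}{\sum_{k<n}S(\omega_{1:k})}$ have liminf $\ge\min I$ and limsup $\le\max I$. $\mathcal I_\textnormal{R}(\omega)=\{I\in\mathcal I:\omega\text{ R-random for }I\}$, $I_\textnormal{R}(\omega)=\bigcap_{I\in\mathcal I_\textnormal{R}(\omega)}I$. *)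

From Stdlib Require Import Reals Lra List.
Import ListNotations.
Open Scope R_scope.

Inductive prog : Type :=
| PZero : prog
| PSucc : prog
| PProj : nat -> prog                   (* i-th argument (0-based) *)
| PComp : prog -> list prog -> prog
| PPrec : prog -> prog -> prog          (* primitive recursion on the first argument *)
| PMu   : prog -> prog.                 (* unbounded minimisation on the first argument *)

Inductive eval : prog -> list nat -> nat -> Prop :=
| eZero args : eval PZero args 0
| eSucc args : eval PSucc args (S (hd 0%nat args))
| eProj i args : eval (PProj i) args (nth i args 0%nat)
| eComp f gs args vs v :
    Forall2 (fun g w => eval g args w) gs vs -> eval f vs v ->
    eval (PComp f gs) args v
| ePrec0 f g args v : eval f args v -> eval (PPrec f g) (0%nat :: args) v
| ePrecS f g n args r v :
    eval (PPrec f g) (n :: args) r -> eval g (n :: r :: args) v ->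
    eval (PPrec f g) (S n :: args) v
| eMu f args n :
    eval f (n :: args) 0%nat ->
    (forall m, (m < n)%nat -> exists k, eval f (m :: args) (S k)) ->
    eval (PMu f) args n.

(* X = {0,1} is bool (true = 1); a path omega has omega_{k+1} = omega k. *)
Definition path := nat -> bool.
(* situations: finite binary strings, s . x = s ++ [x] *)
Definition sit := list bool.

Definition b2n (b : bool) : nat := if b then 1%nat else 0%nat.
Definition b2R (b : bool) : R := if b then 1 else 0.

Definition prefix (w : path) (n : nat) : sit := map w (seq 0 n).

(* injective code of a binary string: binary numeral with a leading 1 *)
Definition code_sit (s : sit) : nat :=
  fold_left (fun acc b => (2 * acc + b2n b)%nat) s 1%nat.

Definition Qval (p m d : nat) : R := (INR p - INR m) / INR (S d).

Definition rat_rec (P M D : prog) (args : list nat) (q : R) : Prop :=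
  exists p m d, eval P args p /\ eval M args m /\ eval D args d /\ q = Qval p m d.

Definition computable {A : Type} (code : A -> list nat) (f : A -> R) : Prop :=
  exists (P M D : prog) (q : A -> nat -> R),
    (forall a n, rat_rec P M D (code a ++ [n]) (q a n)) /\
    (forall a n, Rabs (f a - q a n) <= / 2 ^ n).

Definition lower_semicomputable {A : Type} (code : A -> list nat) (f : A -> R)
  : Prop :=
  exists (P M D : prog) (q : A -> nat -> R),
    (forall a n, rat_rec P M D (code a ++ [n]) (q a n)) /\
    (forall a n, q a n <= q a (S n)) /\
    (forall a, Un_cv (q a) (f a)).

Definition code_S (s : sit) : list nat := [code_sit s].
Definition code_SX (sx : sit * bool) : list nat := [code_sit (fst sx); b2n (snd sx)].
Definition code_N (n : nat) : list nat := [n].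

Definition recursive_sel (Sel : sit -> bool) : Prop :=
  exists P : prog, forall s, eval P (code_S s) (b2n (Sel s)).

Definition temporal (Sel : sit -> bool) : Prop :=
  forall s t, length s = length t -> Sel s = Sel t.

Record ivl := mkIvl {
  lo : R; hi : R;
  lo_ge0 : 0 <= lo; lo_le_hi : lo <= hi; hi_le1 : hi <= 1 }.

(* \overline{E}_I(f) <= 0, i.e. max_{p in I} [p f(1) + (1-p) f(0)] <= 0 *)
Definition upper_exp_le0 (I : ivl) (f : bool -> R) : Prop :=
  forall p, lo I <= p <= hi I -> p * f true + (1 - p) * f false <= 0.

Definition test_supermartingale (I : ivl) (T : sit -> R) : Prop :=
  (forall s, 0 <= T s) /\ T [] = 1 /\
  (forall s, upper_exp_le0 I (fun x => T (s ++ [x]) - T s)).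

Fixpoint mult_aux (D : sit -> bool -> R) (pre s : sit) : R :=
  match s with
  | [] => 1
  | x :: t => D pre x * mult_aux D (pre ++ [x]) t
  end.
Definition mult_proc (D : sit -> bool -> R) (s : sit) : R := mult_aux D [] s.

Definition limsup_infty (T : sit -> R) (w : path) : Prop :=
  forall (M : R) (N : nat), exists n, (N <= n)%nat /\ M < T (prefix w n).

Definition ML_random (w : path) (I : ivl) : Prop :=
  ~ exists T, test_supermartingale I T /\ lower_semicomputable code_S T /\
              limsup_infty T w.

Definition wML_random (w : path) (I : ivl) : Prop :=
  ~ exists D : sit -> bool -> R,
      lower_semicomputable code_SX (fun sx => D (fst sx) (snd sx)) /\
      test_supermartingale I (mult_proc D) /\ limsup_infty (mult_proc D) w.

Definition C_random (w : path) (I : ivl) : Prop :=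
  ~ exists T, test_supermartingale I T /\ computable code_S T /\
              limsup_infty T w.

Definition S_random (w : path) (I : ivl) : Prop :=
  ~ exists (T : sit -> R) (tau : nat -> R),
      test_supermartingale I T /\ computable code_S T /\
      computable code_N tau /\
      (forall n, 0 <= tau n) /\ (forall n, tau n <= tau (S n)) /\
      (forall M, exists n, M < tau n) /\
      (forall (eps : R) (N : nat), 0 < eps ->
         exists n, (N <= n)%nat /\ - eps < T (prefix w n) - tau n).

Fixpoint sel_count (Sel : sit -> bool) (w : path) (n : nat) : nat :=
  match n with
  | O => O
  | Datatypes.S k => (sel_count Sel w k + b2n (Sel (prefix w k)))%nat
  end.
Fixpoint sel_hits (Sel : sit -> bool) (w : path) (n : nat) : nat :=
  match n with
  | O => O
  | Datatypes.S k => (sel_hits Sel w k + b2n (Sel (prefix w k) && w k))%nat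
  end.
Definition sel_freq (Sel : sit -> bool) (w : path) (n : nat) : R :=
  INR (sel_hits Sel w n) / INR (sel_count Sel w n).

Definition freq_condition (Sel : sit -> bool) (w : path) (I : ivl) : Prop :=
  (forall M : nat, exists N, forall n, (N <= n)%nat -> (M < sel_count Sel w n)%nat) ->
  (forall eps, 0 < eps -> exists N, forall n, (N <= n)%nat ->
       lo I - eps < sel_freq Sel w n) /\
  (forall eps, 0 < eps -> exists N, forall n, (N <= n)%nat ->
       sel_freq Sel w n < hi I + eps).

Definition CH_random (w : path) (I : ivl) : Prop :=
  forall Sel, recursive_sel Sel -> freq_condition Sel w I.

Definition wCH_random (w : path) (I : ivl) : Prop :=
  forall Sel, recursive_sel Sel -> temporal Sel -> freq_condition Sel w I.

Definition I_R (rand : path -> ivl -> Prop) (w : path) (x : R) : Prop :=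
  0 <= x <= 1 /\ forall I, rand w I -> lo I <= x <= hi I.

Definition subsetR (A B : R -> Prop) : Prop := forall x, A x -> B x.

From Stdlib Require Import Reals Lra Lia List ZArith Classical IndefiniteDescription.
Import ListNotations.

(* Each inclusion between the sets [I_R _ w] follows from the converse implication
   between the randomness notions, for every fixed forecast [I].

   ML => wML: a product of lower semicomputable multipliers is lower semicomputable.
   wML => C: a computable test supermartingale [T] gives [(T + 1) / 2], the product of the
   multipliers [(T (s ++ [x]) + 1) / (T s + 1)], which are lower semicomputable from the
   dyadic approximations of [T].
   C => S: a test supermartingale staying close to an unbounded [tau] is unbounded.
   C => CH and S => wCH: if along a recursive selection the frequency of ones exceeds
   [hi I + eps] (or falls below [lo I - eps]) infinitely often, bet at the selected rounds
   a small fraction [d] of the capital on the favoured outcome, at odds given by a rational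
   [r] slightly above the bound.  Since [ln] is concave, the capital is at least
   [1 + gam * (number of selected rounds)] whenever the frequency is biased.  For a
   temporal selection this number does not depend on the path, so it is computable and
   can serve as [tau].

   Computability is witnessed by explicit programs: rationals are triples [(p, m, d)]
   standing for [(p - m) / (d + 1)], and products along a situation are computed by
   primitive recursion over the bits of its code. *)

(** * Primitive recursive arithmetic *)

Lemma eval_comp1 F G args v1 v :
  eval G args v1 -> eval F [v1] v -> eval (PComp F [G]) args v.
Proof. intros. econstructor; eauto. Qed.

Lemma eval_comp2 F G1 G2 args v1 v2 v :
  eval G1 args v1 -> eval G2 args v2 -> eval F [v1; v2] v ->
  eval (PComp F [G1; G2]) args v.
Proof. intros. econstructor; eauto. Qed.

Lemma eval_comp3 F G1 G2 G3 args v1 v2 v3 v :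
  eval G1 args v1 -> eval G2 args v2 -> eval G3 args v3 -> eval F [v1; v2; v3] v ->
  eval (PComp F [G1; G2; G3]) args v.
Proof. intros. econstructor; eauto. Qed.

Lemma eval_proj i args v : nth i args 0%nat = v -> eval (PProj i) args v.
Proof. intros <-. constructor. Qed.

Lemma eval_prec f g n args acc v :
  eval (PPrec f g) (n :: args) acc -> eval g (n :: acc :: args) v ->
  eval (PPrec f g) (S n :: args) v.
Proof. intros. econstructor; eauto. Qed.

Definition prog_add : prog := PPrec (PProj 0) (PComp PSucc [PProj 1]).
Definition prog_mul : prog := PPrec PZero (PComp prog_add [PProj 1; PProj 2]).
Definition prog_pred : prog := PPrec PZero (PProj 0).
Definition prog_sub : prog :=
  PComp (PPrec (PProj 0) (PComp prog_pred [PProj 1])) [PProj 1; PProj 0].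
Fixpoint prog_const (k : nat) : prog :=
  match k with O => PZero | S k' => PComp PSucc [prog_const k'] end.

Definition psucc (f : prog) : prog := PComp PSucc [f].
Definition ppred (f : prog) : prog := PComp prog_pred [f].
Definition padd (f g : prog) : prog := PComp prog_add [f; g].
Definition pmul (f g : prog) : prog := PComp prog_mul [f; g].
Definition psub (f g : prog) : prog := PComp prog_sub [f; g].

Lemma eval_prog_add a b rest : eval prog_add (a :: b :: rest) (a + b).
Proof.
  induction a; [constructor; now apply eval_proj|].
  eapply eval_prec; [exact IHa|]. eapply eval_comp1; [now apply eval_proj|constructor].
Qed.

Lemma eval_prog_mul a b rest : eval prog_mul (a :: b :: rest) (a * b).
Proof.
  induction a; [repeat constructor|].
  eapply eval_prec; [exact IHa|]. eapply eval_comp2; try now apply eval_proj.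
  replace (S a * b)%nat with (a * b + b)%nat by lia. apply eval_prog_add.
Qed.

Lemma eval_prog_pred a rest : eval prog_pred (a :: rest) (pred a).
Proof.
  induction a; [repeat constructor|]. eapply eval_prec; [exact IHa|]. now apply eval_proj.
Qed.

Lemma eval_prog_sub a b rest : eval prog_sub (a :: b :: rest) (a - b).
Proof.
  eapply eval_comp2; try now apply eval_proj.
  induction b; [constructor; apply eval_proj; simpl; lia|].
  eapply eval_prec; [exact IHb|]. eapply eval_comp1; [now apply eval_proj|].
  replace (a - S b)%nat with (pred (a - b)) by lia. apply eval_prog_pred.
Qed.

Lemma eval_psucc f args v : eval f args v -> eval (psucc f) args (S v).
Proof. intros. eapply eval_comp1; [eassumption|constructor]. Qed.

Lemma eval_ppred f args v : eval f args v -> eval (ppred f) args (pred v).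
Proof. intros. eapply eval_comp1; [eassumption|apply eval_prog_pred]. Qed.

Lemma eval_padd f g args v w : eval f args v -> eval g args w -> eval (padd f g) args (v + w).
Proof. intros. eapply eval_comp2; [eassumption..|apply eval_prog_add]. Qed.

Lemma eval_pmul f g args v w : eval f args v -> eval g args w -> eval (pmul f g) args (v * w).
Proof. intros. eapply eval_comp2; [eassumption..|apply eval_prog_mul]. Qed.

Lemma eval_psub f g args v w : eval f args v -> eval g args w -> eval (psub f g) args (v - w).
Proof. intros. eapply eval_comp2; [eassumption..|apply eval_prog_sub]. Qed.

Lemma eval_prog_const k args : eval (prog_const k) args k.
Proof. induction k; [constructor|]. now apply eval_psucc. Qed.

Definition prog_odd : prog := PPrec PZero (psub (prog_const 1) (PProj 1)).
Definition prog_div2 : prog := PPrec PZero (padd (PProj 1) (PComp prog_odd [PProj 0])).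
Definition prog_shiftr : prog := PPrec (PProj 0) (PComp prog_div2 [PProj 1]).
Definition prog_pow2 : prog := PPrec (prog_const 1) (padd (PProj 1) (PProj 1)).

Lemma b2n_odd_succ n : b2n (Nat.odd (S n)) = (1 - b2n (Nat.odd n))%nat.
Proof. rewrite Nat.odd_succ, <- Nat.negb_odd. now destruct (Nat.odd n). Qed.

Lemma div2_succ n : Nat.div2 (S n) = (Nat.div2 n + b2n (Nat.odd n))%nat.
Proof.
  pose proof (Nat.div2_odd n) as E. pose proof (Nat.div2_odd (S n)) as ES.
  rewrite Nat.odd_succ, <- Nat.negb_odd in ES.
  destruct (Nat.odd n); simpl in *; lia.
Qed.

Lemma eval_prog_odd n rest : eval prog_odd (n :: rest) (b2n (Nat.odd n)).
Proof.
  induction n; [repeat constructor|]. eapply eval_prec; [exact IHn|].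
  rewrite b2n_odd_succ. apply eval_psub; [apply eval_prog_const|now apply eval_proj].
Qed.

Lemma eval_prog_div2 n rest : eval prog_div2 (n :: rest) (Nat.div2 n).
Proof.
  induction n; [repeat constructor|]. eapply eval_prec; [exact IHn|].
  rewrite div2_succ. apply eval_padd; [now apply eval_proj|].
  eapply eval_comp1; [now apply eval_proj|apply eval_prog_odd].
Qed.

Lemma eval_prog_shiftr j c rest : eval prog_shiftr (j :: c :: rest) (Nat.shiftr c j).
Proof.
  induction j; [constructor; now apply eval_proj|]. eapply eval_prec; [exact IHj|].
  eapply eval_comp1; [now apply eval_proj|apply eval_prog_div2].
Qed.

Lemma eval_prog_pow2 n rest : eval prog_pow2 (n :: rest) (2 ^ n).
Proof.
  induction n; [constructor; apply eval_prog_const|]. eapply eval_prec; [exact IHn|].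
  rewrite Nat.pow_succ_r'. replace (2 * 2 ^ n)%nat with (2 ^ n + 2 ^ n)%nat by lia.
  apply eval_padd; now apply eval_proj.
Qed.

Ltac eval_auto :=
  repeat first
    [ eassumption
    | apply eZero | apply eval_prog_const | apply eval_prog_odd | apply eval_prog_div2
    | apply eval_prog_shiftr | apply eval_prog_pow2
    | apply eval_psucc | apply eval_ppred
    | apply eval_padd | apply eval_pmul | apply eval_psub
    | apply eval_proj; reflexivity
    | eapply eval_comp1 | eapply eval_comp2 | eapply eval_comp3 ].

(** * Binary codes of situations *)

Lemma code_sit_snoc s x : code_sit (s ++ [x]) = (2 * code_sit s + b2n x)%nat.
Proof. unfold code_sit. rewrite fold_left_app. simpl. lia. Qed.

Lemma code_sit_pos s : (1 <= code_sit s)%nat.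
Proof. induction s using rev_ind; [reflexivity|]. rewrite code_sit_snoc. lia. Qed.

Lemma length_lt_code_sit s : (length s < code_sit s)%nat.
Proof.
  induction s using rev_ind; [cbn; lia|].
  rewrite code_sit_snoc, length_app. simpl. pose proof (code_sit_pos s). lia.
Qed.

Lemma odd_b2n x : Nat.odd (b2n x) = x.
Proof. now destruct x. Qed.

Lemma div2_double_b2n c x : Nat.div2 (2 * c + b2n x) = c.
Proof.
  destruct x; simpl b2n; [apply Nat.div2_odd'|rewrite Nat.add_0_r; apply Nat.div2_double].
Qed.

Lemma odd_double_b2n c x : Nat.odd (2 * c + b2n x) = x.
Proof. rewrite Nat.add_comm, Nat.odd_add_mul_2. apply odd_b2n. Qed.

Fixpoint decode_bits (fuel c : nat) : sit :=
  match fuel with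
  | O => []
  | S k => if (c <=? 1)%nat then [] else decode_bits k (Nat.div2 c) ++ [Nat.odd c]
  end.

Definition decode_sit (c : nat) : sit := decode_bits c c.

Lemma code_decode_bits fuel c : (1 <= c <= fuel)%nat -> code_sit (decode_bits fuel c) = c.
Proof.
  revert c; induction fuel as [|k IH]; intros c Hc; [lia|]. simpl.
  destruct (Nat.leb_spec c 1); [cbn; lia|].
  pose proof (Nat.div2_odd c). pose proof (Nat.div2_decr c k ltac:(lia)).
  rewrite code_sit_snoc, IH; destruct (Nat.odd c); simpl in *; lia.
Qed.

Lemma code_decode_sit c : (1 <= c)%nat -> code_sit (decode_sit c) = c.
Proof. intros. apply code_decode_bits. lia. Qed.

Lemma decode_bits_code s fuel : (code_sit s <= fuel)%nat -> decode_bits fuel (code_sit s) = s.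
Proof.
  revert fuel; induction s as [|x s IH] using rev_ind; intros fuel Hf.
  - destruct fuel; [cbn in Hf; lia|reflexivity].
  - rewrite code_sit_snoc in *. pose proof (code_sit_pos s).
    destruct fuel as [|k]; [lia|]. cbn [decode_bits].
    destruct (Nat.leb_spec (2 * code_sit s + b2n x) 1); [lia|].
    rewrite div2_double_b2n, odd_double_b2n, IH; [reflexivity|lia].
Qed.
Lemma decode_code_sit s : decode_sit (code_sit s) = s.
Proof. apply decode_bits_code. lia. Qed.

Lemma code_sit_zeros k : code_sit (prefix (fun _ => false) k) = (2 ^ k)%nat.
Proof.
  induction k; [reflexivity|]. unfold prefix in *.
  rewrite seq_S, map_app. cbn [map]. rewrite code_sit_snoc, IHk, Nat.pow_succ_r'. simpl; lia.
Qed.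

(** * Products along a situation *)

Fixpoint nat_mult_aux (f : sit -> bool -> nat) (pre s : sit) : nat :=
  match s with
  | [] => 1%nat
  | x :: t => (f pre x * nat_mult_aux f (pre ++ [x]) t)%nat
  end.

Lemma nat_mult_aux_snoc f pre s x :
  nat_mult_aux f pre (s ++ [x]) = (nat_mult_aux f pre s * f (pre ++ s) x)%nat.
Proof.
  revert pre; induction s as [|y s IH]; intros pre; simpl.
  - rewrite app_nil_r. lia.
  - rewrite IH, <- app_assoc. simpl. lia.
Qed.

Lemma nat_mult_aux_pos f pre s :
  (forall pre x, (0 < f pre x)%nat) -> (0 < nat_mult_aux f pre s)%nat.
Proof. intros H. revert pre; induction s; intros; simpl; [lia|]. now apply Nat.mul_pos_pos. Qed.

Lemma shiftr_succ_div2 c j : Nat.shiftr c (S j) = Nat.shiftr (Nat.div2 c) j.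
Proof. induction j; [reflexivity|]. cbn [Nat.shiftr nat_rect] in *. now rewrite <- IHj. Qed.

Lemma shiftr_le1 c j : (c <= 1)%nat -> (Nat.shiftr c j <= 1)%nat.
Proof.
  intros Hc. induction j; [exact Hc|]. cbn [Nat.shiftr nat_rect].
  destruct (Nat.shiftr c j) as [|[|]]; simpl; lia.
Qed.

Section SitProduct.

Variable NUM : prog.
Variable f : sit -> bool -> nat -> nat.
Hypothesis eval_NUM : forall pre x e, eval NUM [code_sit pre; b2n x; e] (f pre x e).

(* Bit [j] of [c = code_sit s] is the [j]-th letter of [s] counted from the end, and
   [Nat.shiftr c (S j)] codes the prefix before it; there is no such letter once
   [Nat.shiftr c j] has reached the leading marker bit [1]. *)
Definition digit_factor (j c e : nat) : nat :=
  if (2 <=? Nat.shiftr c j)%nat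
  then f (decode_sit (Nat.shiftr c (S j))) (Nat.odd (Nat.shiftr c j)) e
  else 1%nat.

Fixpoint digit_prod (B c e : nat) : nat :=
  match B with
  | O => 1%nat
  | S B' => (digit_prod B' c e * digit_factor B' c e)%nat
  end.

Lemma digit_factor_succ j c e : digit_factor (S j) c e = digit_factor j (Nat.div2 c) e.
Proof. unfold digit_factor. now rewrite !(shiftr_succ_div2 c). Qed.

Lemma digit_prod_succ B c e :
  digit_prod (S B) c e = (digit_factor 0 c e * digit_prod B (Nat.div2 c) e)%nat.
Proof.
  induction B; [simpl; lia|].
  cbn [digit_prod] in *. rewrite IHB, digit_factor_succ. lia.
Qed.

Lemma digit_prod_code s B e :
  (length s <= B)%nat ->
  digit_prod B (code_sit s) e = nat_mult_aux (fun pre x => f pre x e) [] s.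
Proof.
  revert B; induction s as [|x s IH] using rev_ind; intros B HB.
  - induction B; [reflexivity|]. cbn [digit_prod].
    rewrite IHB by (simpl; lia). cbn [nat_mult_aux]. unfold digit_factor.
    pose proof (shiftr_le1 (code_sit []) B (le_n 1)).
    destruct (Nat.leb_spec 2 (Nat.shiftr (code_sit []) B)); lia.
  - rewrite length_app in HB. simpl in HB. destruct B as [|B]; [lia|].
    pose proof (code_sit_pos s).
    rewrite digit_prod_succ, code_sit_snoc, div2_double_b2n, IH, nat_mult_aux_snoc by lia.
    unfold digit_factor. cbn [Nat.shiftr nat_rect].
    rewrite div2_double_b2n, odd_double_b2n, decode_code_sit.
    destruct (Nat.leb_spec 2 (2 * code_sit s + b2n x)); [simpl; lia|lia].
Qed.

(* [PComp] evaluates all of its arguments, so [NUM] is run even when the guard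
   [1 - (2 - h)] vanishes; its first argument is clamped to [max 1 _] to keep it a
   valid code. *)
Definition prog_digit_factor : prog :=
  let h := PComp prog_shiftr [PProj 0; PProj 2] in
  let h1 := PComp prog_div2 [h] in
  let guard := psub (prog_const 1) (psub (prog_const 2) h) in
  let arg := padd h1 (psub (prog_const 1) h1) in
  padd (pmul guard (PComp NUM [arg; PComp prog_odd [h]; PProj 3]))
       (psub (prog_const 1) guard).

Lemma eval_prog_digit_factor j acc c e :
  eval prog_digit_factor [j; acc; c; e] (digit_factor j c e).
Proof.
  set (h := Nat.shiftr c j : nat).
  set (arg := (Nat.div2 h + (1 - Nat.div2 h))%nat).
  assert (Hnum : eval NUM [arg; b2n (Nat.odd h); e] (f (decode_sit arg) (Nat.odd h) e)).
  { rewrite <- (code_decode_sit arg) at 1 by (unfold arg; lia). apply eval_NUM. }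
  assert (E : digit_factor j c e =
              ((1 - (2 - h)) * f (decode_sit arg) (Nat.odd h) e + (1 - (1 - (2 - h))))%nat).
  { unfold digit_factor. fold h. change (Nat.shiftr c (S j)) with (Nat.div2 h).
    destruct (Nat.leb_spec 2 h).
    - replace arg with (Nat.div2 h)
        by (pose proof (Nat.div2_odd h); destruct (Nat.odd h); cbn [Nat.b2n] in *; unfold arg; lia).
      replace (2 - h)%nat with 0%nat by lia. simpl. lia.
    - replace (1 - (2 - h))%nat with 0%nat by lia. reflexivity. }
  rewrite E. unfold prog_digit_factor. eval_auto.
Qed.

Definition prog_digit_prod : prog := PPrec (prog_const 1) (pmul (PProj 1) prog_digit_factor).

Lemma eval_prog_digit_prod B c e : eval prog_digit_prod [B; c; e] (digit_prod B c e).
Proof.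
  induction B; [constructor; apply eval_prog_const|].
  eapply eval_prec; [exact IHB|].
  apply eval_pmul; [now apply eval_proj|apply eval_prog_digit_factor].
Qed.

Definition prog_sit_prod : prog := PComp prog_digit_prod [PProj 0; PProj 0; PProj 1].

Lemma eval_prog_sit_prod s e :
  eval prog_sit_prod [code_sit s; e] (nat_mult_aux (fun pre x => f pre x e) [] s).
Proof.
  rewrite <- (digit_prod_code s (code_sit s)) by (pose proof (length_lt_code_sit s); lia).
  eapply eval_comp3; try (apply eval_proj; reflexivity). apply eval_prog_digit_prod.
Qed.

End SitProduct.

(** * Multiplier processes *)

Lemma mult_aux_snoc D pre s x : mult_aux D pre (s ++ [x]) = mult_aux D pre s * D (pre ++ s) x.
Proof.
  revert pre; induction s as [|y s IH]; intros pre; simpl.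
  - rewrite app_nil_r. ring.
  - rewrite IH, <- app_assoc. simpl. ring.
Qed.

Lemma mult_aux_ext D D' pre s :
  (forall pre x, D pre x = D' pre x) -> mult_aux D pre s = mult_aux D' pre s.
Proof. intros H. revert pre; induction s; intros; simpl; [reflexivity|]. now rewrite H, IHs. Qed.

Lemma mult_aux_nonneg D pre s : (forall pre x, 0 <= D pre x) -> 0 <= mult_aux D pre s.
Proof. intros H. revert pre; induction s; intros; simpl; [lra|]. now apply Rmult_le_pos. Qed.

Lemma mult_aux_le D D' pre s :
  (forall pre x, 0 <= D pre x <= D' pre x) -> mult_aux D pre s <= mult_aux D' pre s.
Proof.
  intros H. revert pre; induction s; intros; simpl; [lra|].
  apply Rmult_le_compat; try apply H; auto. apply mult_aux_nonneg. apply H.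
Qed.

Lemma mult_aux_cv (Dn : nat -> sit -> bool -> R) D pre s :
  (forall pre x, Un_cv (fun n => Dn n pre x) (D pre x)) ->
  Un_cv (fun n => mult_aux (Dn n) pre s) (mult_aux D pre s).
Proof.
  intros H. revert pre; induction s; intros; simpl.
  - intros eps Heps. exists 0%nat. intros. unfold R_dist. rewrite Rminus_diag, Rabs_R0. exact Heps.
  - apply CV_mult; auto.
Qed.

Lemma mult_aux_div D D' pre s :
  (forall pre x, D' pre x <> 0) ->
  mult_aux (fun pre x => D pre x / D' pre x) pre s = mult_aux D pre s / mult_aux D' pre s.
Proof.
  intros H. assert (H' : forall pre s, mult_aux D' pre s <> 0).
  { intros p t. revert p; induction t; intros; simpl; [lra|].
    now apply Rmult_integral_contrapositive. }
  revert pre; induction s; intros; simpl; [field|].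
  rewrite IHs. field. split; auto.
Qed.

Lemma INR_nat_mult_aux f pre s :
  INR (nat_mult_aux f pre s) = mult_aux (fun pre x => INR (f pre x)) pre s.
Proof. revert pre; induction s; intros; simpl; [reflexivity|]. now rewrite mult_INR, IHs. Qed.

Lemma mult_proc_Rmax0 D s :
  (forall s, 0 <= mult_proc D s) -> mult_aux (fun pre x => Rmax (D pre x) 0) [] s = mult_proc D s.
Proof.
  intros H. induction s as [|x s IH] using rev_ind; [reflexivity|].
  unfold mult_proc in *. rewrite !mult_aux_snoc, IH. simpl.
  specialize (H (s ++ [x])). unfold mult_proc in H. rewrite mult_aux_snoc in H. simpl in H.
  destruct (Rle_lt_or_eq_dec 0 (mult_aux D [] s)) as [Hpos|Hzero].
  - rewrite <- IH. apply mult_aux_nonneg. intros. apply Rmax_r.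
  - rewrite Rmax_left; [reflexivity|]. apply (Rmult_le_reg_l _ _ _ Hpos). lra.
  - rewrite <- Hzero. ring.
Qed.

Lemma mult_proc_telescope F s :
  (forall s, 0 < F s) -> mult_proc (fun pre x => F (pre ++ [x]) / F pre) s = F s / F [].
Proof.
  intros HF. unfold mult_proc. induction s as [|x s IH] using rev_ind.
  - simpl. field. apply Rgt_not_eq, HF.
  - rewrite mult_aux_snoc, IH. simpl. field. split; apply Rgt_not_eq, HF.
Qed.

(** * Recursive rational sequences *)

Lemma INR_S_neq0 d : INR (S d) <> 0.
Proof. apply not_0_INR. lia. Qed.

Lemma INR_S_pred_mul d1 d2 : INR (S (pred (S d1 * S d2))) = INR (S d1) * INR (S d2).
Proof. rewrite <- mult_INR. reflexivity. Qed.

Lemma Qval_nat k : INR k = Qval k 0 0.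
Proof. unfold Qval. simpl. field. Qed.

Lemma Qval_plus p1 m1 d1 p2 m2 d2 :
  Qval p1 m1 d1 + Qval p2 m2 d2 =
  Qval (p1 * S d2 + p2 * S d1) (m1 * S d2 + m2 * S d1) (pred (S d1 * S d2)).
Proof.
  unfold Qval. rewrite INR_S_pred_mul, !plus_INR, !mult_INR.
  field. split; apply INR_S_neq0.
Qed.

Lemma Qval_opp p m d : - Qval p m d = Qval m p d.
Proof. unfold Qval. field. apply INR_S_neq0. Qed.

Lemma Qval_mult p1 m1 d1 p2 m2 d2 :
  Qval p1 m1 d1 * Qval p2 m2 d2 =
  Qval (p1 * p2 + m1 * m2) (p1 * m2 + m1 * p2) (pred (S d1 * S d2)).
Proof.
  unfold Qval. rewrite INR_S_pred_mul, !plus_INR, !mult_INR.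
  field. split; apply INR_S_neq0.
Qed.

Lemma Qval_Rmax0 p m d : Rmax (Qval p m d) 0 = Qval (p - m) 0 d.
Proof.
  unfold Qval. pose proof (pos_INR (S d)). pose proof (INR_S_neq0 d).
  destruct (Nat.le_gt_cases m p).
  - assert (0 <= INR p - INR m) by (apply le_INR in H1; lra).
    rewrite minus_INR, Rmax_left
      by (auto; apply Rmult_le_pos; auto; apply Rlt_le, Rinv_0_lt_compat; lra).
    simpl. field. auto.
  - replace (p - m)%nat with 0%nat by lia. apply lt_INR in H1.
    rewrite Rmax_right; [simpl; field; auto|].
    assert (0 < / INR (S d)) by (apply Rinv_0_lt_compat; lra).
    unfold Rdiv. nra.
Qed.

Lemma Qval_inv p m d : (m < p)%nat -> / Qval p m d = Qval (S d) 0 (pred (p - m)).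
Proof.
  intros Hmp. unfold Qval. replace (S (pred (p - m))) with (p - m)%nat by lia.
  rewrite minus_INR by lia. simpl (INR 0). apply lt_INR in Hmp.
  field. split; [lra|apply INR_S_neq0].
Qed.

Lemma lt_of_Qval_pos p m d : 0 < Qval p m d -> (m < p)%nat.
Proof.
  unfold Qval. intros H. apply INR_lt.
  assert (0 < INR (S d)) by (apply lt_0_INR; lia).
  apply Rmult_lt_reg_r with (/ INR (S d)); [now apply Rinv_0_lt_compat|].
  unfold Rdiv in H. lra.
Qed.

Definition rec_rat {A : Type} (code : A -> list nat) (q : A -> nat -> R) : Prop :=
  exists P M D : prog, forall a n, rat_rec P M D (code a ++ [n]) (q a n).

Section RecRat.

Context {A : Type} (code : A -> list nat).

Lemma rec_rat_ext q q' : (forall a n, q a n = q' a n) -> rec_rat code q -> rec_rat code q'.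
Proof.
  intros E [P [M [D H]]]. exists P, M, D. intros a n. rewrite <- E. apply H.
Qed.

Lemma rec_rat_nat (G : prog) (h : A -> nat -> nat) :
  (forall a n, eval G (code a ++ [n]) (h a n)) -> rec_rat code (fun a n => INR (h a n)).
Proof.
  intros HG. exists G, PZero, PZero. intros a n.
  exists (h a n), 0%nat, 0%nat. repeat split; [apply HG|constructor|constructor|apply Qval_nat].
Qed.

Lemma rec_rat_const k : rec_rat code (fun _ _ => INR k).
Proof. apply (rec_rat_nat (prog_const k)). intros. apply eval_prog_const. Qed.

Lemma rec_rat_plus q1 q2 :
  rec_rat code q1 -> rec_rat code q2 -> rec_rat code (fun a n => q1 a n + q2 a n).
Proof.
  intros [P1 [M1 [D1 H1]]] [P2 [M2 [D2 H2]]].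
  exists (padd (pmul P1 (psucc D2)) (pmul P2 (psucc D1))),
         (padd (pmul M1 (psucc D2)) (pmul M2 (psucc D1))),
         (ppred (pmul (psucc D1) (psucc D2))).
  intros a n.
  destruct (H1 a n) as (p1 & m1 & d1 & ? & ? & ? & ->).
  destruct (H2 a n) as (p2 & m2 & d2 & ? & ? & ? & ->).
  rewrite Qval_plus. do 3 eexists. repeat split; eval_auto.
Qed.

Lemma rec_rat_opp q : rec_rat code q -> rec_rat code (fun a n => - q a n).
Proof.
  intros [P [M [D H]]]. exists M, P, D. intros a n.
  destruct (H a n) as (p & m & d & ? & ? & ? & ->).
  rewrite Qval_opp. do 3 eexists. repeat split; eassumption.
Qed.

Lemma rec_rat_mult q1 q2 :
  rec_rat code q1 -> rec_rat code q2 -> rec_rat code (fun a n => q1 a n * q2 a n).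
Proof.
  intros [P1 [M1 [D1 H1]]] [P2 [M2 [D2 H2]]].
  exists (padd (pmul P1 P2) (pmul M1 M2)), (padd (pmul P1 M2) (pmul M1 P2)),
         (ppred (pmul (psucc D1) (psucc D2))).
  intros a n.
  destruct (H1 a n) as (p1 & m1 & d1 & ? & ? & ? & ->).
  destruct (H2 a n) as (p2 & m2 & d2 & ? & ? & ? & ->).
  rewrite Qval_mult. do 3 eexists. repeat split; eval_auto.
Qed.

Lemma rec_rat_Rmax0 q : rec_rat code q -> rec_rat code (fun a n => Rmax (q a n) 0).
Proof.
  intros [P [M [D H]]]. exists (psub P M), PZero, D. intros a n.
  destruct (H a n) as (p & m & d & ? & ? & ? & ->).
  rewrite Qval_Rmax0. do 3 eexists. repeat split; eval_auto.
Qed.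

Lemma rec_rat_inv q :
  (forall a n, 0 < q a n) -> rec_rat code q -> rec_rat code (fun a n => / q a n).
Proof.
  intros Hpos [P [M [D H]]]. exists (psucc D), PZero, (ppred (psub P M)). intros a n.
  pose proof (Hpos a n) as Hq.
  destruct (H a n) as (p & m & d & ? & ? & ? & E). rewrite E in Hq |- *.
  rewrite Qval_inv by exact (lt_of_Qval_pos _ _ _ Hq). do 3 eexists. repeat split; eval_auto.
Qed.

End RecRat.

Lemma rec_rat_comp {A B : Type} (codeA : A -> list nat) (codeB : B -> list nat)
    (f : A -> B) (Gs : list prog) q :
  (forall a n, Forall2 (fun G v => eval G (codeA a ++ [n]) v) Gs (codeB (f a) ++ [n])) ->
  rec_rat codeB q -> rec_rat codeA (fun a n => q (f a) n).
Proof.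
  intros HG [P [M [D H]]]. exists (PComp P Gs), (PComp M Gs), (PComp D Gs). intros a n.
  destruct (H (f a) n) as (p & m & d & ? & ? & ? & ?).
  exists p, m, d. repeat split; auto; econstructor; eauto.
Qed.

Lemma rec_rat_fst q : rec_rat code_S q -> rec_rat code_SX (fun a n => q (fst a) n).
Proof.
  apply (rec_rat_comp _ _ fst [PProj 0; PProj 2]). intros a n.
  repeat constructor.
Qed.

Lemma rec_rat_snoc q : rec_rat code_S q -> rec_rat code_SX (fun a n => q (fst a ++ [snd a]) n).
Proof.
  apply (rec_rat_comp _ _ (fun a => fst a ++ [snd a])
           [padd (pmul (prog_const 2) (PProj 0)) (PProj 1); PProj 2]).
  intros [s x] n. unfold code_S, code_SX. simpl. rewrite code_sit_snoc.
  repeat constructor. eval_auto.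
Qed.

Lemma rec_rat_inv_pow2 {A : Type} (code : A -> list nat) k :
  (forall a, length (code a) = k) -> rec_rat code (fun _ n => / 2 ^ n).
Proof.
  intros Hk. apply (rec_rat_ext _ (fun _ n => / INR (2 ^ n))).
  { intros. now rewrite pow_INR. }
  apply rec_rat_inv.
  { intros. apply lt_0_INR, Nat.neq_0_lt_0, Nat.pow_nonzero. lia. }
  apply (rec_rat_nat _ (PComp prog_pow2 [PProj k])). intros a n.
  eapply eval_comp1; [apply eval_proj|apply eval_prog_pow2].
  rewrite <- (Hk a), app_nth2, Nat.sub_diag by lia. reflexivity.
Qed.

Lemma rec_rat_mult_aux (g : sit * bool -> nat -> R) :
  rec_rat code_SX g -> (forall a n, 0 <= g a n) ->
  rec_rat code_S (fun s n => mult_aux (fun pre x => g (pre, x) n) [] s).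
Proof.
  intros [P [M [D H]]] Hg0.
  destruct (functional_choice (fun (an : (sit * bool) * nat) (pd : nat * nat) =>
      eval (psub P M) (code_SX (fst an) ++ [snd an]) (fst pd) /\
      eval D (code_SX (fst an) ++ [snd an]) (snd pd) /\
      g (fst an) (snd an) = INR (fst pd) / INR (S (snd pd)))) as [pd Hpd].
  { intros [a n]. destruct (H a n) as (p & m & d & Hp & Hm & Hd & E).
    exists ((p - m)%nat, d). simpl. repeat split; [eval_auto|exact Hd|].
    rewrite <- (Rmax_left (g a n) 0) by apply Hg0.
    rewrite E, Qval_Rmax0. unfold Qval. simpl. field. apply INR_S_neq0. }
  set (num := fun pre x e => fst (pd ((pre, x), e))).
  set (den := fun pre x e => S (snd (pd ((pre, x), e)))).
  exists (prog_sit_prod (psub P M)), PZero, (ppred (prog_sit_prod (psucc D))).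
  intros s n. unfold code_S. simpl.
  assert (Hden : (0 < nat_mult_aux (fun pre x => den pre x n) [] s)%nat)
    by (apply nat_mult_aux_pos; intros; unfold den; lia).
  exists (nat_mult_aux (fun pre x => num pre x n) [] s), 0%nat,
         (pred (nat_mult_aux (fun pre x => den pre x n) [] s)).
  repeat split.
  - apply (eval_prog_sit_prod _ num). intros pre x e. apply (Hpd ((pre, x), e)).
  - constructor.
  - apply eval_ppred, (eval_prog_sit_prod _ den). intros pre x e.
    apply eval_psucc, (Hpd ((pre, x), e)).
  - unfold Qval. replace (S (pred _)) with (nat_mult_aux (fun pre x => den pre x n) [] s) by lia.
    rewrite !INR_nat_mult_aux, Rminus_0_r, <- mult_aux_div by (intros; apply INR_S_neq0).
    apply mult_aux_ext. intros pre x. apply (Hpd ((pre, x), n)).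
Qed.

Lemma computable_of_rec_rat {A : Type} (code : A -> list nat) (f : A -> R) :
  rec_rat code (fun a _ => f a) -> computable code f.
Proof.
  intros [P [M [D H]]]. exists P, M, D, (fun a _ => f a). split; [exact H|].
  intros a n. rewrite Rminus_diag, Rabs_R0. apply Rlt_le, Rinv_0_lt_compat, pow_lt. lra.
Qed.

Ltac rec_rat_auto :=
  repeat first
    [ assumption
    | apply rec_rat_plus | apply rec_rat_mult | apply rec_rat_opp | apply rec_rat_Rmax0
    | apply (rec_rat_const _ 1) | apply rec_rat_const
    | eapply rec_rat_inv_pow2; intros; cbn; reflexivity ].

(** * Lower semicomputable multiplier processes *)

Lemma Un_cv_inv u l : Un_cv u l -> l <> 0 -> Un_cv (fun n => / u n) (/ l).
Proof.
  intros Hu Hl. apply (continuity_seq (fun x => / x) u l); [|exact Hu].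
  apply (continuity_pt_inv id); [apply derivable_continuous_pt, derivable_pt_id|exact Hl].
Qed.

Lemma Un_cv_Rmax0 u l : Un_cv u l -> Un_cv (fun n => Rmax (u n) 0) (Rmax l 0).
Proof.
  intros Hu. apply (continuity_seq (fun x => Rmax x 0) u l); [|exact Hu].
  intros eps Heps. exists eps. split; [exact Heps|]. intros x [_ Hx]. simpl in *.
  unfold R_dist in *. unfold Rmax.
  destruct (Rle_dec x 0), (Rle_dec l 0); apply Rabs_def2 in Hx; apply Rabs_def1; lra.
Qed.

Lemma lower_semicomputable_mult_proc D :
  lower_semicomputable code_SX (fun a => D (fst a) (snd a)) ->
  (forall s, 0 <= mult_proc D s) ->
  lower_semicomputable code_S (mult_proc D).
Proof.
  intros [P [M [Dd [q [Hq [Hmono Hcv]]]]]] HD.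
  assert (Hrec : rec_rat code_SX (fun a n => Rmax (q a n) 0))
    by (apply rec_rat_Rmax0; now exists P, M, Dd).
  destruct (rec_rat_mult_aux _ Hrec (fun _ _ => Rmax_r _ _)) as [P' [M' [D' H']]].
  exists P', M', D', (fun s n => mult_aux (fun pre x => Rmax (q (pre, x) n) 0) [] s).
  repeat split.
  - exact H'.
  - intros s n. apply mult_aux_le. intros pre x.
    split; [apply Rmax_r|apply Rle_max_compat_r, (Hmono (pre, x))].
  - intros s. rewrite <- mult_proc_Rmax0 by exact HD.
    apply mult_aux_cv. intros pre x. apply Un_cv_Rmax0, (Hcv (pre, x)).
Qed.

Lemma inv_pow2_succ n : / 2 ^ S n = / 2 ^ n / 2.
Proof. simpl. field. apply pow_nonzero. lra. Qed.

Lemma inv_pow2_pos n : 0 < / 2 ^ n.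
Proof. apply Rinv_0_lt_compat, pow_lt. lra. Qed.

Section DyadicApproximation.

Variables (f : R) (q : nat -> R).
Hypothesis q_approx : forall n, Rabs (f - q n) <= / 2 ^ n.

Lemma dyadic_approx_bounds n : q n - / 2 ^ n <= f <= q n + / 2 ^ n.
Proof. pose proof (q_approx n) as H. unfold Rabs in H. destruct (Rcase_abs (f - q n)); lra. Qed.

(* The shift by [3 * / 2 ^ n] absorbs the errors of two consecutive approximations. *)
Lemma dyadic_lower_incr n : q n - 3 * / 2 ^ n <= q (S n) - 3 * / 2 ^ S n.
Proof.
  pose proof (dyadic_approx_bounds n). pose proof (dyadic_approx_bounds (S n)).
  rewrite inv_pow2_succ in *. pose proof (inv_pow2_pos n). lra.
Qed.

Lemma dyadic_upper_decr n : q (S n) + 3 * / 2 ^ S n <= q n + 3 * / 2 ^ n.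
Proof.
  pose proof (dyadic_approx_bounds n). pose proof (dyadic_approx_bounds (S n)).
  rewrite inv_pow2_succ in *. pose proof (inv_pow2_pos n). lra.
Qed.

Lemma dyadic_cv k : Un_cv (fun n => q n + k * / 2 ^ n) f.
Proof.
  replace f with (f + 0) by ring. apply CV_plus.
  - intros eps Heps. destruct (cv_pow_half 1 eps Heps) as [N HN]. exists N. intros n Hn.
    specialize (HN n Hn). unfold R_dist in *. rewrite Rabs_minus_sym.
    eapply Rle_lt_trans; [apply q_approx|].
    rewrite Rminus_0_r, Rabs_right in HN by (apply Rle_ge, Rlt_le, Rdiv_lt_0_compat, pow_lt; lra).
    unfold Rdiv in HN. lra.
  - exact (cv_pow_half k).
Qed.

End DyadicApproximation.

Lemma lower_semicomputable_ratio T :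
  computable code_S T -> (forall s, 0 <= T s) ->
  lower_semicomputable code_SX (fun a => (T (fst a ++ [snd a]) + 1) / (T (fst a) + 1)).
Proof.
  intros [P [M [D [q [Hq Happ]]]]] HT.
  assert (Hq_rec : rec_rat code_S q) by (now exists P, M, D).
  assert (Happ1 : forall s n, Rabs ((T s + 1) - (q s n + 1)) <= / 2 ^ n).
  { intros s n. replace (T s + 1 - (q s n + 1)) with (T s - q s n) by ring. apply Happ. }
  set (lower := fun s n => Rmax (q s n + 1 + - INR 3 * / 2 ^ n) 0).
  set (upper := fun s n => q s n + 1 + INR 3 * / 2 ^ n).
  assert (Hupper : forall s n, T s + 1 <= upper s n).
  { intros s n. pose proof (dyadic_approx_bounds _ _ (Happ1 s) n). pose proof (inv_pow2_pos n).
    unfold upper. simpl. lra. }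
  assert (Hrec : rec_rat code_SX (fun a n => lower (fst a ++ [snd a]) n * / upper (fst a) n)).
  { apply rec_rat_mult.
    - apply (rec_rat_snoc lower). unfold lower. rec_rat_auto.
    - apply rec_rat_inv; [intros; specialize (Hupper (fst a) n); specialize (HT (fst a)); lra|].
      apply (rec_rat_fst upper). unfold upper. rec_rat_auto. }
  destruct Hrec as [P' [M' [D' H']]].
  exists P', M', D', (fun a n => lower (fst a ++ [snd a]) n * / upper (fst a) n).
  repeat split; [exact H'| |].
  - intros [s x] n. simpl. pose proof (Hupper s n). pose proof (Hupper s (S n)). pose proof (HT s).
    apply Rmult_le_compat.
    + apply Rmax_r.
    + apply Rlt_le, Rinv_0_lt_compat. lra.
    + apply Rle_max_compat_r. pose proof (dyadic_lower_incr _ _ (Happ1 (s ++ [x])) n).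
      simpl in *. lra.
    + apply Rinv_le_contravar; [lra|]. pose proof (dyadic_upper_decr _ _ (Happ1 s) n).
      unfold upper. simpl in *. lra.
  - intros [s x]. simpl. unfold Rdiv. pose proof (HT s). pose proof (HT (s ++ [x])).
    apply CV_mult.
    + rewrite <- (Rmax_left (T (s ++ [x]) + 1) 0) by lra.
      apply Un_cv_Rmax0, (dyadic_cv _ _ (Happ1 (s ++ [x]))).
    + apply Un_cv_inv; [apply (dyadic_cv _ _ (Happ1 s))|lra].
Qed.

(** * Betting along a biased selection *)

Definition sel_factor (Sel : sit -> bool) (a1 a0 : R) (pre : sit) (x : bool) : R :=
  if Sel pre then (if x then a1 else a0) else 1.

Definition sel_bet (Sel : sit -> bool) (a1 a0 : R) : sit -> R :=
  mult_proc (sel_factor Sel a1 a0).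

Lemma sel_bet_test_supermartingale (I : ivl) Sel a1 a0 :
  0 <= a1 -> 0 <= a0 -> (forall p, lo I <= p <= hi I -> p * a1 + (1 - p) * a0 <= 1) ->
  test_supermartingale I (sel_bet Sel a1 a0).
Proof.
  intros H1 H0 Hp.
  assert (Hfac : forall pre x, 0 <= sel_factor Sel a1 a0 pre x)
    by (intros; unfold sel_factor; destruct (Sel pre), x; lra).
  unfold sel_bet, mult_proc. repeat split.
  - intros s. now apply mult_aux_nonneg.
  - intros s p Hpi. rewrite !mult_aux_snoc. simpl.
    pose proof (mult_aux_nonneg _ [] s Hfac). specialize (Hp p Hpi).
    set (V := mult_aux (sel_factor Sel a1 a0) [] s) in *.
    unfold sel_factor. destruct (Sel s); [|lra].
    replace (p * (V * a1 - V) + (1 - p) * (V * a0 - V))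
      with (V * (p * a1 + (1 - p) * a0 - 1)) by ring.
    assert (0 <= V * (1 - (p * a1 + (1 - p) * a0))) by (apply Rmult_le_pos; lra). lra.
Qed.

Lemma prefix_S w n : prefix w (S n) = prefix w n ++ [w n].
Proof. unfold prefix. now rewrite seq_S, map_app. Qed.

Lemma sel_hits_le_count Sel w n : (sel_hits Sel w n <= sel_count Sel w n)%nat.
Proof. induction n; simpl; [lia|]. destruct (Sel (prefix w n)), (w n); simpl; lia. Qed.

Lemma sel_bet_prefix Sel a1 a0 w n :
  sel_bet Sel a1 a0 (prefix w n) =
  a1 ^ sel_hits Sel w n * a0 ^ (sel_count Sel w n - sel_hits Sel w n).
Proof.
  induction n; [unfold sel_bet, mult_proc, prefix; simpl; ring|].
  unfold sel_bet, mult_proc in *. rewrite prefix_S, mult_aux_snoc, IHn. simpl.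
  pose proof (sel_hits_le_count Sel w n).
  unfold sel_factor. destruct (Sel (prefix w n)), (w n); simpl b2n; simpl andb.
  - replace (sel_hits Sel w n + 1)%nat with (S (sel_hits Sel w n)) by lia.
    replace (sel_count Sel w n + 1 - S (sel_hits Sel w n))%nat
      with (sel_count Sel w n - sel_hits Sel w n)%nat by lia.
    simpl. ring.
  - replace (sel_count Sel w n + 1 - (sel_hits Sel w n + 0))%nat
      with (S (sel_count Sel w n - sel_hits Sel w n)) by lia.
    rewrite Nat.add_0_r. simpl. ring.
  - rewrite !Nat.add_0_r. ring.
  - rewrite !Nat.add_0_r. ring.
Qed.

Lemma sel_bet_computable Sel a1 a0 :
  recursive_sel Sel -> 0 <= a1 -> 0 <= a0 ->
  rec_rat code_SX (fun _ _ => a1) -> rec_rat code_SX (fun _ _ => a0) ->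
  computable code_S (sel_bet Sel a1 a0).
Proof.
  intros [PS HPS] H1 H0 Ha1 Ha0.
  assert (Hsel : rec_rat code_SX (fun a _ => INR (b2n (Sel (fst a))))).
  { apply (rec_rat_nat _ (PComp PS [PProj 0])). intros [s x] n.
    eapply eval_comp1; [apply eval_proj; reflexivity|apply HPS]. }
  assert (Hbit : rec_rat code_SX (fun a _ => INR (b2n (snd a)))).
  { apply (rec_rat_nat _ (PProj 1)). intros [s x] n. now apply eval_proj. }
  assert (Hfac : rec_rat code_SX (fun a _ => sel_factor Sel a1 a0 (fst a) (snd a))).
  { apply (rec_rat_ext _ (fun a _ =>
        INR (b2n (Sel (fst a))) * (INR (b2n (snd a)) * a1 + (1 + - INR (b2n (snd a))) * a0)
        + (1 + - INR (b2n (Sel (fst a)))))).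
    - intros [s x] n. unfold sel_factor. simpl. destruct (Sel s), x; simpl; ring.
    - rec_rat_auto. }
  apply computable_of_rec_rat, (rec_rat_mult_aux (fun a _ => sel_factor Sel a1 a0 (fst a) (snd a)));
    [exact Hfac|].
  intros [s x] n. unfold sel_factor. simpl. destruct (Sel s), x; lra.
Qed.

Lemma ln_ge_1_minus_inv x : 0 < x -> 1 - / x <= ln x.
Proof.
  intros Hx. pose proof (exp_ineq1_le (- ln x)) as H.
  rewrite exp_Ropp, exp_ln in H by exact Hx. lra.
Qed.

Lemma ln_1_plus_ge y : 0 <= y -> y - y * y <= ln (1 + y).
Proof.
  intros Hy. eapply Rle_trans; [|apply ln_ge_1_minus_inv; lra].
  apply (Rmult_le_reg_l (1 + y)); [lra|].
  replace ((1 + y) * (1 - / (1 + y))) with y by (field; lra). nra.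
Qed.

Lemma ln_1_minus_ge z : 0 <= z <= 1 / 2 -> - (z + 2 * z * z) <= ln (1 - z).
Proof.
  intros Hz. eapply Rle_trans; [|apply ln_ge_1_minus_inv; lra].
  apply (Rmult_le_reg_l (1 - z)); [lra|].
  replace ((1 - z) * (1 - / (1 - z))) with (- z) by (field; lra). nra.
Qed.

Lemma bet_log_drift r th d :
  0 <= r -> 0 < th -> r + th <= 1 -> 0 < d <= th / 6 ->
  th * d / 2 <= (r + th) * ln (1 + d * (1 - r)) + (1 - (r + th)) * ln (1 - d * r).
Proof.
  intros Hr Hth Hrth Hd.
  pose proof (ln_1_plus_ge (d * (1 - r)) ltac:(nra)).
  pose proof (ln_1_minus_ge (d * r) ltac:(split; nra)).
  (* First-order terms give [th * d]; second-order ones cost at most [3 * d ^ 2 <= th * d / 2]. *)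
  assert (th * d / 2 <= (r + th) * (d * (1 - r) - d * (1 - r) * (d * (1 - r)))
                        + (1 - (r + th)) * - (d * r + 2 * (d * r) * (d * r))).
  { assert (Hpoly : (r + th) * (1 - r) * (1 - r) + 2 * (1 - (r + th)) * r * r <= 3) by nra.
    assert (d * d * ((r + th) * (1 - r) * (1 - r) + 2 * (1 - (r + th)) * r * r) <= 3 * d * d)
      by nra.
    nra. }
  nra.
Qed.

Lemma bet_growth r th d (h c : nat) :
  0 <= r -> 0 < th -> r + th <= 1 -> 0 < d <= th / 6 ->
  (h <= c)%nat -> (r + th) * INR c <= INR h ->
  1 + th * d / 2 * INR c <= (1 + d * (1 - r)) ^ h * (1 - d * r) ^ (c - h).
Proof.
  intros Hr Hth Hrth Hd Hhc Hh.
  assert (Hw : 0 < 1 + d * (1 - r)) by nra.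
  assert (Hl : 0 < 1 - d * r) by nra.
  set (lw := ln (1 + d * (1 - r))). set (ll := ln (1 - d * r)).
  assert (Hlw : 0 <= lw).
  { assert (Hy : 0 <= d * (1 - r) <= 1) by (split; nra).
    pose proof (ln_1_plus_ge _ (proj1 Hy)).
    assert (0 <= d * (1 - r) * (1 - d * (1 - r))) by (apply Rmult_le_pos; lra).
    unfold lw. lra. }
  assert (Hll : ll <= 0).
  { pose proof (exp_ineq1_le ll) as E. unfold ll in *. rewrite exp_ln in E by lra. nra. }
  pose proof (bet_log_drift r th d Hr Hth Hrth Hd). fold lw ll in H.
  assert (Hlog : th * d / 2 * INR c <= ln ((1 + d * (1 - r)) ^ h * (1 - d * r) ^ (c - h))).
  { rewrite ln_mult, !ln_pow, minus_INR by (auto; apply pow_lt; lra). fold lw ll.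
    pose proof (pos_INR c).
    assert (0 <= (INR h - (r + th) * INR c) * (lw - ll)) by (apply Rmult_le_pos; lra).
    nra. }
  pose proof (exp_ineq1_le (th * d / 2 * INR c)).
  rewrite <- (exp_ln ((1 + d * (1 - r)) ^ h * (1 - d * r) ^ (c - h)))
    by (apply Rmult_lt_0_compat; apply pow_lt; lra).
  destruct Hlog as [Hlt|Heq]; [apply exp_increasing in Hlt|rewrite <- Heq]; lra.
Qed.

Definition fav_hits (fav : bool) (Sel : sit -> bool) (w : path) (n : nat) : nat :=
  if fav then sel_hits Sel w n else (sel_count Sel w n - sel_hits Sel w n)%nat.

Lemma sel_freq_mul Sel w n :
  (0 < sel_count Sel w n)%nat ->
  sel_freq Sel w n * INR (sel_count Sel w n) = INR (sel_hits Sel w n).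
Proof. intros H. unfold sel_freq. field. apply not_0_INR. lia. Qed.

Lemma sel_freq_bounds Sel w n : 0 <= sel_freq Sel w n <= 1.
Proof.
  destruct (Nat.eq_0_gt_0_cases (sel_count Sel w n)) as [H0|Hpos].
  - pose proof (sel_hits_le_count Sel w n). unfold sel_freq. rewrite H0.
    replace (sel_hits Sel w n) with 0%nat by lia. simpl. unfold Rdiv. rewrite Rmult_0_l. lra.
  - pose proof (sel_freq_mul Sel w n Hpos). apply lt_0_INR in Hpos.
    pose proof (le_INR _ _ (sel_hits_le_count Sel w n)). pose proof (pos_INR (sel_hits Sel w n)).
    split; nra.
Qed.

Lemma not_eventually_lt (u : nat -> R) a :
  ~ (exists N, forall n, (N <= n)%nat -> u n < a) -> forall N, exists n, (N <= n)%nat /\ a <= u n.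
Proof.
  intros H N. apply NNPP. intros Hno. apply H. exists N. intros n Hn.
  apply Rnot_le_lt. intros Hle. apply Hno. now exists n.
Qed.

Lemma freq_condition_violation (w : path) (I : ivl) (Sel : sit -> bool) :
  ~ freq_condition Sel w I ->
  exists (fav : bool) (t eps : R), 0 <= t /\ 0 < eps /\ t + eps <= 1 /\
    (forall p, lo I <= p <= hi I -> (if fav then p else 1 - p) <= t) /\
    forall N, exists n, (N <= n)%nat /\
      (t + eps) * INR (sel_count Sel w n) <= INR (fav_hits fav Sel w n).
Proof.
  intros Hviol. apply imply_to_and in Hviol as [Hc Hnot].
  destruct (Hc 0%nat) as [N0 HN0].
  pose proof (lo_ge0 I). pose proof (lo_le_hi I). pose proof (hi_le1 I).
  apply not_and_or in Hnot as [Hlo|Hhi].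
  - apply not_all_ex_not in Hlo as [eps Hlo]. apply imply_to_and in Hlo as [Heps Hlo].
    assert (Hio : forall N, exists n, (N <= n)%nat /\ sel_freq Sel w n <= lo I - eps).
    { intros N. destruct (not_eventually_lt (fun n => - sel_freq Sel w n) (- (lo I - eps))
        ltac:(intros [M HM]; apply Hlo; exists M; intros n Hn; specialize (HM n Hn); lra) N)
        as [n [Hn Hle]]. exists n. split; [exact Hn|lra]. }
    exists false, (1 - lo I), eps. repeat split; try lra.
    + destruct (Hio 0%nat) as [n [_ Hn]]. pose proof (sel_freq_bounds Sel w n). lra.
    + intros p Hp. lra.
    + intros N. destruct (Hio (max N N0)) as [n [Hn Hle]]. exists n. split; [lia|].
      specialize (HN0 n ltac:(lia)). pose proof (sel_freq_mul Sel w n HN0).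
      unfold fav_hits. rewrite minus_INR by apply sel_hits_le_count.
      apply lt_0_INR in HN0. nra.
  - apply not_all_ex_not in Hhi as [eps Hhi]. apply imply_to_and in Hhi as [Heps Hhi].
    pose proof (not_eventually_lt _ _ Hhi) as Hio.
    exists true, (hi I), eps. repeat split; try lra.
    + destruct (Hio 0%nat) as [n [_ Hn]]. pose proof (sel_freq_bounds Sel w n). lra.
    + intros p Hp. lra.
    + intros N. destruct (Hio (max N N0)) as [n [Hn Hle]]. exists n. split; [lia|].
      specialize (HN0 n ltac:(lia)). pose proof (sel_freq_mul Sel w n HN0).
      unfold fav_hits. apply lt_0_INR in HN0. nra.
Qed.

Lemma rational_above t eps : 0 <= t -> 0 < eps ->
  exists r1 R0 : nat, (1 <= R0)%nat /\ t <= INR r1 * / INR R0 <= t + eps.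
Proof.
  intros Ht Heps. destruct (archimed_cor1 eps Heps) as [R0 [HR HR0]].
  assert (HR' : 0 < INR R0) by (apply lt_0_INR; lia).
  destruct (archimed (t * INR R0)) as [Hup1 Hup2].
  assert (Hup : (0 < up (t * INR R0))%Z) by (apply lt_IZR; simpl; nra).
  exists (Z.to_nat (up (t * INR R0))), R0. split; [lia|].
  rewrite INR_IZR_INZ, Z2Nat.id by lia.
  assert (/ INR R0 * INR R0 = 1) by (field; lra).
  split; apply (Rmult_le_reg_r (INR R0)); auto; rewrite Rmult_assoc, Rinv_l by lra; nra.
Qed.

Lemma biased_selection_bet (w : path) (I : ivl) (Sel : sit -> bool) (fav : bool) (t eps : R) :
  recursive_sel Sel -> 0 <= t -> 0 < eps -> t + eps <= 1 ->
  (forall p, lo I <= p <= hi I -> (if fav then p else 1 - p) <= t) ->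
  exists (T : sit -> R) (gam : R), test_supermartingale I T /\ computable code_S T /\ 0 < gam /\
    forall n, (t + eps) * INR (sel_count Sel w n) <= INR (fav_hits fav Sel w n) ->
      1 + gam * INR (sel_count Sel w n) <= T (prefix w n).
Proof.
  intros Hsel Ht Heps Hte Hp.
  destruct (rational_above t (eps / 2) Ht ltac:(lra)) as (r1 & R0 & HR0 & Hr).
  destruct (INR_archimed (eps / 2) 6 ltac:(lra)) as [K HK].
  assert (HK0 : (0 < K)%nat) by (destruct K; [simpl in HK; lra|lia]).
  set (r := INR r1 * / INR R0) in *. set (d := / INR K).
  assert (Hconst : rec_rat code_SX (fun _ _ => d) /\ rec_rat code_SX (fun _ _ => r)).
  { split; [|apply rec_rat_mult; [apply rec_rat_const|]];
      apply rec_rat_inv; (intros; apply lt_0_INR; lia) || apply rec_rat_const. }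
  destruct Hconst as [Hd_rec Hr_rec].
  assert (Hd : 0 < d <= eps / 2 / 6).
  { assert (0 < INR K) by (apply lt_0_INR; lia). split; [now apply Rinv_0_lt_compat|].
    unfold d. apply (Rmult_le_reg_l (INR K)); [lra|]. rewrite Rinv_r by lra. lra. }
  set (win := 1 + d * (1 - r)). set (lose := 1 - d * r).
  assert (Hwin : rec_rat code_SX (fun _ _ => win)) by (unfold win, Rminus; rec_rat_auto).
  assert (Hlose : rec_rat code_SX (fun _ _ => lose)) by (unfold lose, Rminus; rec_rat_auto).
  assert (Hbets : 0 <= win /\ 0 <= lose) by (unfold win, lose; split; nra).
  exists (if fav then sel_bet Sel win lose else sel_bet Sel lose win), (eps / 2 * d / 2).
  split; [|split; [|split]].
  - destruct fav; apply sel_bet_test_supermartingale; try apply Hbets;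
      intros p Hpi; specialize (Hp p Hpi); unfold win, lose; nra.
  - destruct fav; apply sel_bet_computable; auto; apply Hbets.
  - nra.
  - intros n Hn. pose proof (sel_hits_le_count Sel w n). pose proof (pos_INR (sel_count Sel w n)).
    unfold fav_hits in Hn. destruct fav; rewrite sel_bet_prefix.
    + apply bet_growth; auto; nra.
    + replace (sel_hits Sel w n)
        with (sel_count Sel w n - (sel_count Sel w n - sel_hits Sel w n))%nat at 1 by lia.
      rewrite (Rmult_comm (lose ^ _)). apply bet_growth; auto; try lia; nra.
Qed.

Lemma freq_violation_bet (w : path) (I : ivl) (Sel : sit -> bool) :
  recursive_sel Sel -> ~ freq_condition Sel w I ->
  exists (T : sit -> R) (gam : R), test_supermartingale I T /\ computable code_S T /\ 0 < gam /\
    forall N, exists n, (N <= n)%nat /\ 1 + gam * INR (sel_count Sel w n) <= T (prefix w n).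
Proof.
  intros Hsel Hviol.
  destruct (freq_condition_violation w I Sel Hviol) as (fav & t & eps & Ht & He & Hte & Hp & Hio).
  destruct (biased_selection_bet w I Sel fav t eps Hsel Ht He Hte Hp)
    as (T & gam & HT & HTc & Hg & Hgrow).
  exists T, gam. split; [exact HT|split; [exact HTc|split; [exact Hg|]]].
  intros N. destruct (Hio N) as [n [Hn Hbias]]. exists n. auto.
Qed.

(** * Implications between the randomness notions *)

Lemma test_supermartingale_ext I T T' :
  (forall s, T s = T' s) -> test_supermartingale I T -> test_supermartingale I T'.
Proof.
  intros E (H0 & H1 & H2). repeat split.
  - intros s. rewrite <- E. apply H0.
  - now rewrite <- E.
  - intros s p Hp. rewrite <- !E. now apply H2.
Qed.

Lemma test_supermartingale_average I T :
  test_supermartingale I T -> test_supermartingale I (fun s => (T s + 1) / 2).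
Proof.
  intros (H0 & H1 & H2). repeat split.
  - intros s. specialize (H0 s). lra.
  - rewrite H1. field.
  - intros s p Hp. specialize (H2 s p Hp). simpl in *. lra.
Qed.

Lemma sel_count_temporal Sel w n :
  temporal Sel -> sel_count Sel w n = sel_count Sel (fun _ => false) n.
Proof.
  intros Ht. induction n; [reflexivity|]. simpl.
  rewrite IHn, (Ht (prefix w n) (prefix (fun _ => false) n)); [reflexivity|].
  unfold prefix. now rewrite !length_map.
Qed.

Lemma sel_count_zeros_computable Sel m :
  recursive_sel Sel -> (0 < m)%nat ->
  computable code_N (fun n => INR (sel_count Sel (fun _ => false) n) * / INR m).
Proof.
  intros [PS HPS] Hm. apply computable_of_rec_rat, rec_rat_mult.
  - apply (rec_rat_nat _ (PPrec PZero (padd (PProj 1) (PComp PS [PComp prog_pow2 [PProj 0]])))).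
    intros n j. unfold code_N. simpl. induction n; [repeat constructor|].
    eapply eval_prec; [exact IHn|]. apply eval_padd; [now apply eval_proj|].
    eapply eval_comp1; [eapply eval_comp1; [now apply eval_proj|apply eval_prog_pow2]|].
    rewrite <- code_sit_zeros. apply HPS.
  - apply rec_rat_inv; [intros; apply lt_0_INR; lia|apply rec_rat_const].
Qed.

Lemma ML_random_wML_random w I : ML_random w I -> wML_random w I.
Proof.
  intros HML (D & Hlsc & Htsm & Hlim). apply HML. exists (mult_proc D).
  split; [exact Htsm|split; [|exact Hlim]].
  apply lower_semicomputable_mult_proc; [exact Hlsc|apply Htsm].
Qed.

Lemma wML_random_C_random w I : wML_random w I -> C_random w I.
Proof.
  intros HW (T & Htsm & Hcomp & Hlim). pose proof Htsm as (HT0 & HT1 & _).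
  set (D := fun pre x => (T (pre ++ [x]) + 1) / (T pre + 1)).
  assert (HD : forall s, mult_proc D s = (T s + 1) / 2).
  { intros s. unfold D. rewrite (mult_proc_telescope (fun s => T s + 1)), HT1.
    - field.
    - intros t. specialize (HT0 t). lra. }
  apply HW. exists D. split; [|split].
  - exact (lower_semicomputable_ratio T Hcomp HT0).
  - apply (test_supermartingale_ext I (fun s => (T s + 1) / 2)); [intros; now rewrite HD|].
    now apply test_supermartingale_average.
  - intros M N. destruct (Hlim (2 * M) N) as [n [Hn HM]]. exists n. split; [exact Hn|].
    rewrite HD. lra.
Qed.

Lemma C_random_S_random w I : C_random w I -> S_random w I.
Proof.
  intros HC (T & tau & Htsm & HTc & _ & _ & Hmono & Hunb & Hls). apply HC.
  exists T. split; [exact Htsm|split; [exact HTc|]].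
  intros M N. destruct (Hunb (M + 1)) as [n0 Hn0].
  destruct (Hls 1 (max N n0) Rlt_0_1) as [n [Hn Hgt]]. exists n. split; [lia|].
  pose proof (growing_prop tau n n0 Hmono ltac:(lia)). lra.
Qed.

Lemma C_random_CH_random w I : C_random w I -> CH_random w I.
Proof.
  intros HC Sel Hsel. apply NNPP. intros Hviol.
  destruct (imply_to_and _ _ Hviol) as [Hc _].
  destruct (freq_violation_bet w I Sel Hsel Hviol) as (T & gam & HT & HTc & Hg & Hgrow).
  apply HC. exists T. split; [exact HT|split; [exact HTc|]].
  intros M N. destruct (INR_archimed gam M Hg) as [K HK].
  destruct (Hc K) as [N1 HN1]. destruct (Hgrow (max N N1)) as [n [Hn Hbig]].
  exists n. split; [lia|]. specialize (HN1 n ltac:(lia)). apply lt_INR in HN1. nra.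
Qed.

Lemma S_random_wCH_random w I : S_random w I -> wCH_random w I.
Proof.
  intros HS Sel Hsel Htemp. apply NNPP. intros Hviol.
  destruct (imply_to_and _ _ Hviol) as [Hc _].
  destruct (freq_violation_bet w I Sel Hsel Hviol) as (T & gam & HT & HTc & Hg & Hgrow).
  destruct (archimed_cor1 gam Hg) as [m [Hm Hm0]].
  assert (Hm' : 0 < / INR m) by (apply Rinv_0_lt_compat, lt_0_INR; lia).
  set (count := fun n => INR (sel_count Sel (fun _ => false) n)).
  assert (Hcount : forall n, INR (sel_count Sel w n) = count n)
    by (intros; unfold count; now rewrite (sel_count_temporal Sel w n Htemp)).
  apply HS. exists T, (fun n => count n * / INR m).
  split; [exact HT|split; [exact HTc|split; [|split; [|split; [|split]]]]].
  - now apply sel_count_zeros_computable.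
  - intros n. apply Rmult_le_pos; [apply pos_INR|lra].
  - intros n. apply Rmult_le_compat_r; [lra|]. apply le_INR. simpl. lia.
  - intros M. destruct (INR_archimed (/ INR m) M Hm') as [K HK].
    destruct (Hc K) as [N1 HN1]. exists N1. specialize (HN1 N1 (le_n _)).
    apply lt_INR in HN1. rewrite Hcount in HN1. nra.
  - intros e N He'. destruct (Hgrow N) as [n [Hn Hbig]]. exists n. split; [exact Hn|].
    rewrite Hcount in Hbig. assert (0 <= count n) by apply pos_INR. nra.
Qed.

Lemma CH_random_wCH_random w I : CH_random w I -> wCH_random w I.
Proof. intros H Sel Hsel _. now apply H. Qed.

Lemma I_R_antimono (A B : path -> ivl -> Prop) w :
  (forall I, A w I -> B w I) -> subsetR (I_R B w) (I_R A w).
Proof. intros H x [Hx Hall]. split; auto. Qed.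

Theorem corollary1 : forall w : path,
  subsetR (I_R wCH_random w) (I_R CH_random w) /\
  subsetR (I_R CH_random w) (I_R C_random w) /\
  subsetR (I_R wCH_random w) (I_R S_random w) /\
  subsetR (I_R S_random w) (I_R C_random w) /\
  subsetR (I_R C_random w) (I_R wML_random w) /\
  subsetR (I_R wML_random w) (I_R ML_random w).
Proof.
  intros w. split; [|split; [|split; [|split; [|split]]]]; apply I_R_antimono; intros I.
  - apply CH_random_wCH_random.
  - apply C_random_CH_random.
  - apply S_random_wCH_random.
  - apply C_random_S_random.
  - apply wML_random_C_random.
  - apply ML_random_wML_random.
Qed.
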